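(* For every integer $m\ge 1$, every $0\le s\le m$ and every fixed $\lambda_1,\dots,\lambda_m$, the function $G_s(m,\{\lambda_j\}|\{\xi_k\})$ is symmetric under all permutations of the variables $\xi_1,\xi_2,\dots,\xi_m$.
   Context: Fix a real parameter $\zeta\in(0,\pi)$. For integers $m\ge1$ and $0\le s\le m$ set $\epsilon_j=-\tfrac12$ for $1\le j\le s$ and $\epsilon_j=+\tfrac12$ for $s<j\le m$; $\epsilon_j$ is attached to the variable $\lambda_j$. For complex variables $\lambda_1,\dots,\lambda_m,\xi_1,\dots,\xi_m$ define $$G_s(m,\{\lambda_j\}|\{\xi_k\})=\frac{1}{s!(m-s)!}\sum_{\sigma\in S_m}(-1)^{[\sigma]}\prod_{1\le k<j\le m}\frac{\sinh(\lambda_{\sigma(j)}-\xi_k+i\epsilon_{\sigma(j)}\zeta)\,\sinh(\lambda_{\sigma(k)}-\xi_j-i\epsilon_{\sigma(k)}\zeta)}{\sinh(\lambda_{\sigma(j)}-\lambda_{\sigma(k)}+i(\epsilon_{\sigma(j)}+\epsilon_{\sigma(k)})\zeta)},$$ where the sum is over all permutations $\sigma$ of $\{1,\dots,m\}$ and $(-1)^{[\sigma]}$ is the sign of $\sigma$ (an identity of meromorphic functions). *)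

From HB Require Import structures.
From mathcomp Require Import all_boot all_order all_fingroup all_algebra.
From mathcomp Require Import reals.
From mathcomp.analysis Require Import sequences exp trigo.
From mathcomp.real_closed Require Import complex.
Set Implicit Arguments. Unset Strict Implicit. Unset Printing Implicit Defensive.
Import Order.TTheory GRing.Theory Num.Theory.
Local Open Scope ring_scope.
Local Open Scope complex_scope.

Definition cexp (R : realType) (z : R[i]) : R[i] :=
  let: Complex x y := z in (expR x * cos y) +i* (expR x * sin y).

Definition csinh (R : realType) (z : R[i]) : R[i] :=
  (cexp z - cexp (- z)) / 2%:R.

(* epsilon_j attached to lambda_j, with 0-based index j : 'I_m
   (paper's index j+1): -1/2 if j+1 <= s, +1/2 otherwise. *)
Definition eps {R : realType} (m s : nat) (j : 'I_m) : R :=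
  if (j < s)%N then - (1 / 2%:R) else 1 / 2%:R.
Arguments eps {R} m s j.

Definition iR (R : realType) (x : R) : R[i] := 0 +i* x.

Definition G (R : realType) (zeta : R) (m s : nat)
    (lam xi : 'I_m -> R[i]) : R[i] :=
  ((s`! * (m - s)`!)%:R)^-1 *
  \sum_(sigma : 'S_m)
    (-1) ^+ (odd_perm sigma) *
    \prod_(j < m) \prod_(k < m | (k < j)%N)
      (csinh (lam (sigma j) - xi k + iR (eps m s (sigma j) * zeta)) *
       csinh (lam (sigma k) - xi j - iR (eps m s (sigma k) * zeta)) /
       csinh (lam (sigma j) - lam (sigma k)
              + iR ((eps m s (sigma j) + eps m s (sigma k)) * zeta))).
Arguments G {R} zeta m s lam xi.

(** Swapping two adjacent variables [xi_i], [xi_(i+1)] only affects the factor of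
    the pair [(i+1, i)] in each summand, up to a relabelling of the remaining
    factors. Pairing the summand of [sigma] with that of [sigma] composed with
    the transposition [(i i+1)], the three-term identity
    [sinh(x-a) sinh(y-b) - sinh(x-b) sinh(y-a) = sinh(x-y) sinh(a-b)] shows
    that the difference between the swapped and unswapped summands does not
    change under this composition, while the sign flips; hence the alternating
    sum of the differences vanishes. Adjacent transpositions generate [S_m]. *)
From HB Require Import structures.
From mathcomp Require Import all_boot all_order all_fingroup all_algebra.
From mathcomp Require Import reals ring zify.
From mathcomp.analysis Require Import sequences exp trigo.
From mathcomp.real_closed Require Import complex.
From Stdlib Require Import FunctionalExtensionality.
Import Order.TTheory GRing.Theory Num.Theory.
Local Open Scope ring_scope.
Local Open Scope complex_scope.

Section AdjacentTranspositions.
Variables (n : nat) (P : 'S_n -> Prop).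
Hypotheses (P1 : P 1) (PM : forall s t, P s -> P t -> P (s * t)%g).
Hypothesis Padj : forall x y : 'I_n, y = x.+1 :> nat -> P (tperm x y).

Lemma tperm_ind_dist d (x y : 'I_n) : y = (x + d.+1)%N :> nat -> P (tperm x y).
Proof.
elim: d y => [|d IHd] y yE; first by apply: Padj; rewrite yE addn1.
have lt_z : (x + d.+1 < n)%N by have := ltn_ord y; lia.
pose z := Ordinal lt_z.
have zx : z != x by rewrite -(inj_eq val_inj) /=; apply/eqP; lia.
have yx : y != x by rewrite -(inj_eq val_inj) /= yE; apply/eqP; lia.
have -> : tperm x y = (tperm x z ^ tperm z y)%g by rewrite tpermJ tpermD // tpermL.
rewrite conjgE tpermV; apply: PM; last apply: PM; try exact: IHd.
all: by apply: Padj; rewrite /= yE; lia.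
Qed.

Lemma tperm_ind (x y : 'I_n) : P (tperm x y).
Proof.
case: (ltngtP x y) => [xy|yx|/val_inj->]; last by rewrite tperm1.
- by apply: (@tperm_ind_dist (y - x).-1); lia.
- by rewrite tpermC; apply: (@tperm_ind_dist (x - y).-1); lia.
Qed.

Lemma perm_ind_adjacent s : P s.
Proof.
have [ts -> _] := prod_tpermP s.
elim: ts => [|[x y] ts IH]; first by rewrite big_nil.
by rewrite big_cons; apply: PM => //; apply: tperm_ind.
Qed.

End AdjacentTranspositions.

Section HyperbolicSine.
Variable R : realType.

Lemma cexpD (z w : R[i]) : cexp (z + w) = cexp z * cexp w.
Proof.
case: z => x y; case: w => x' y'.
by rewrite /cexp /= expRD cosD sinD; congr (_ +i* _); ring.
Qed.

Lemma cexp0 : cexp (0 : R[i]) = 1.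
Proof. by rewrite /cexp /= expR0 cos0 sin0 !mulr1 mulr0. Qed.

Lemma cexp_mulN (z : R[i]) : cexp z * cexp (- z) = 1.
Proof. by rewrite -cexpD subrr cexp0. Qed.

Lemma cexp_neq0 (z : R[i]) : cexp z != 0.
Proof.
by apply/eqP => z0; move: (cexp_mulN z); rewrite z0 mul0r => /eqP; rewrite eq_sym oner_eq0.
Qed.

Lemma cexpN (z : R[i]) : cexp (- z) = (cexp z)^-1.
Proof. by apply: (mulfI (cexp_neq0 z)); rewrite cexp_mulN mulfV ?cexp_neq0. Qed.

Lemma csinhB (x a : R[i]) :
  csinh (x - a) = (cexp x / cexp a - cexp a / cexp x) / 2%:R.
Proof. by rewrite /csinh cexpD cexpN opprB cexpD cexpN. Qed.

Lemma csinh_three_term (x y a b : R[i]) :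
  csinh (x - a) * csinh (y - b) - csinh (x - b) * csinh (y - a) =
  csinh (x - y) * csinh (a - b).
Proof. by rewrite !csinhB; field; rewrite !cexp_neq0. Qed.

Lemma iRD (x y : R) : iR (x + y) = iR x + iR y.
Proof. by apply/eqP; rewrite /iR eq_complex /= add0r !eqxx. Qed.

End HyperbolicSine.

Section Symmetry.
Variables (R : realType) (zeta : R) (m s : nat) (lam : 'I_m -> R[i]).

Definition lam_up p := lam p + iR (eps m s p * zeta).
Definition lam_dn p := lam p - iR (eps m s p * zeta).

Definition fplus p (x : R[i]) := csinh (lam p - x + iR (eps m s p * zeta)).
Definition fminus p (x : R[i]) := csinh (lam p - x - iR (eps m s p * zeta)).
Definition den p q :=
  csinh (lam p - lam q + iR ((eps m s p + eps m s q) * zeta)).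

Lemma fplusE p x : fplus p x = csinh (lam_up p - x).
Proof. by rewrite /fplus /lam_up; congr csinh; ring. Qed.

Lemma fminusE p x : fminus p x = csinh (lam_dn p - x).
Proof. by rewrite /fminus /lam_dn; congr csinh; ring. Qed.

Lemma denE p q : den p q = csinh (lam_up p - lam_dn q).
Proof. by rewrite /den /lam_up /lam_dn mulrDl iRD; congr csinh; ring. Qed.

Lemma den_exchange p q a b : den p q != 0 ->
  fplus p a * fminus q b / den p q - fplus p b * fminus q a / den p q =
  csinh (a - b).
Proof.
move=> den_neq0.
by rewrite -mulrBl !fplusE !fminusE csinh_three_term -denE mulrAC mulfV ?mul1r.
Qed.

Definition summand (sigma : 'S_m) (xi : 'I_m -> R[i]) :=
  \prod_(j < m) \prod_(k < m | (k < j)%N)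
      (csinh (lam (sigma j) - xi k + iR (eps m s (sigma j) * zeta)) *
       csinh (lam (sigma k) - xi j - iR (eps m s (sigma k) * zeta)) /
       csinh (lam (sigma j) - lam (sigma k)
              + iR ((eps m s (sigma j) + eps m s (sigma k)) * zeta))).

Lemma GE xi : G zeta m s lam xi =
  ((s`! * (m - s)`!)%:R)^-1 *
  \sum_(sigma : 'S_m) (-1) ^+ odd_perm sigma * summand sigma xi.
Proof. by []. Qed.

Definition lower_prod (F : 'I_m -> 'I_m -> R[i]) :=
  \prod_(p : 'I_m * 'I_m | (p.2 < p.1)%N) F p.1 p.2.

Lemma summandE sigma xi : summand sigma xi =
  lower_prod (fun j k => fplus (sigma j) (xi k)) *
  lower_prod (fun j k => fminus (sigma k) (xi j)) /
  lower_prod (fun j k => den (sigma j) (sigma k)).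
Proof. by rewrite /summand pair_big_dep /lower_prod -prodfV -!big_split. Qed.

Section AdjacentSwap.
Variables (i j : 'I_m).
Hypothesis jE : j = i.+1 :> nat.
Let t := tperm i j.

Lemma adj_neq : i != j.
Proof. by rewrite -(inj_eq val_inj) /= jE neq_ltn ltnSn. Qed.

Definition lower' (p : 'I_m * 'I_m) :=
  (p.2 < p.1)%N && ~~ ((p.1 == j) && (p.2 == i)).

Definition lower_prod' (F : 'I_m -> 'I_m -> R[i]) := \prod_(p | lower' p) F p.1 p.2.

Lemma lower_prodE F : lower_prod F = lower_prod' F * F j i.
Proof. by rewrite /lower_prod (bigD1 (j, i)) /= 1?mulrC // jE. Qed.

Lemma lower'_tpermL a b : lower' (t a, b) = lower' (a, b).
Proof.
rewrite /lower' /t /=; case: tpermP => [->|->|/eqP na /eqP nb];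
  rewrite ?eqxx ?(negbTE adj_neq) ?(negbTE nb) //=.
all: rewrite -?(inj_eq val_inj) /= jE; apply/idP/idP; lia.
Qed.

Lemma lower'_tpermR a b : lower' (a, t b) = lower' (a, b).
Proof.
rewrite /lower' /t /=; case: tpermP => [->|->|/eqP na /eqP nb];
  rewrite ?eqxx ?(negbTE na) //=.
all: rewrite -?(inj_eq val_inj) /= jE; apply/idP/idP; lia.
Qed.

Definition tperm_if (b : bool) : 'S_m := if b then t else 1%g.

Lemma tperm_ifK b : involutive (tperm_if b).
Proof. by case: b => x /=; rewrite ?tpermK ?perm1. Qed.

Lemma lower'_tperm_if b c a d : lower' (tperm_if b a, tperm_if c d) = lower' (a, d).
Proof. by case: b; case: c; rewrite /= ?perm1 ?lower'_tpermL ?lower'_tpermR. Qed.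

(* The pairs other than [(j, i)] are permuted among themselves by [t]. *)
Lemma lower_prod_split F H b c :
    (forall x y, H x y = F (tperm_if b x) (tperm_if c y)) ->
  lower_prod H = lower_prod' F * H j i.
Proof.
move=> HE; rewrite lower_prodE; congr (_ * _).
pose h p := (tperm_if b p.1, tperm_if c p.2).
have h_inj : injective h.
  by apply: (can_inj (g := h)) => -[x y]; rewrite /h /= !tperm_ifK.
rewrite /lower_prod' [RHS](reindex_inj h_inj); apply: eq_big => -[x y] /=.
  by rewrite lower'_tperm_if.
by move=> _; rewrite HE.
Qed.

Hypothesis den_neq0 : forall p q : 'I_m, p != q -> den p q != 0.

Section FixedPermutation.
Variables (sigma : 'S_m) (xi : 'I_m -> R[i]).

Let C := lower_prod' (fun x y => fplus (sigma x) (xi y)) *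
  lower_prod' (fun x y => fminus (sigma y) (xi x)) /
  lower_prod' (fun x y => den (sigma x) (sigma y)).

Lemma summand_split {sigma' : 'S_m} {xi' b c} :
    (forall x, sigma' x = sigma (tperm_if b x)) ->
    (forall y, xi' y = xi (tperm_if c y)) ->
  summand sigma' xi' =
  C * (fplus (sigma' j) (xi' i) * fminus (sigma' i) (xi' j) / den (sigma' j) (sigma' i)).
Proof.
move=> sigmaE xiE; rewrite summandE.
rewrite (@lower_prod_split (fun x y => fplus (sigma x) (xi y)) _ b c); last first.
  by move=> x y; rewrite sigmaE xiE.
rewrite (@lower_prod_split (fun x y => fminus (sigma y) (xi x)) _ c b); last first.
  by move=> x y; rewrite sigmaE xiE.
rewrite (@lower_prod_split (fun x y => den (sigma x) (sigma y)) _ b b); last first.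
  by move=> x y; rewrite !sigmaE.
by rewrite /C !invfM; ring.
Qed.

Lemma summand_swap_diff :
  summand (t * sigma)%g xi - summand (t * sigma)%g (xi \o t) =
  summand sigma xi - summand sigma (xi \o t).
Proof.
have id_sigma x : sigma x = sigma (tperm_if false x) by rewrite perm1.
have id_xi y : xi y = xi (tperm_if false y) by rewrite perm1.
have t_sigma x : (t * sigma)%g x = sigma (tperm_if true x) by rewrite permM.
have t_xi y : (xi \o t) y = xi (tperm_if true y) by [].
have sij : sigma i != sigma j by rewrite (inj_eq perm_inj) adj_neq.
have sji : sigma j != sigma i by rewrite eq_sym.
rewrite (summand_split t_sigma id_xi) (summand_split t_sigma t_xi).
rewrite (summand_split id_sigma id_xi) (summand_split id_sigma t_xi).
by rewrite /= !permM tpermL tpermR -!mulrBr !den_exchange ?den_neq0.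
Qed.

End FixedPermutation.

Lemma G_swap_adjacent xi : G zeta m s lam (xi \o t) = G zeta m s lam xi.
Proof.
rewrite !GE; congr (_ * _); apply/eqP; rewrite eq_sym -subr_eq0 -sumrB.
set D := \sum_(sigma : 'S_m) _.
have DN : D = - D.
  rewrite {1}/D (reindex_inj (mulgI t)) -sumrN; apply: eq_bigr => sigma _.
  rewrite -!mulrBr summand_swap_diff odd_mul_tperm adj_neq signr_addb.
  by rewrite expr1 mulN1r mulNr.
by move/eqP: DN; rewrite -addr_eq0 -mulr2n mulrn_eq0.
Qed.

End AdjacentSwap.
End Symmetry.

Theorem lemma3p1 (R : realType) (zeta : R) (m s : nat)
    (lam : 'I_m -> R[i]) :
  0 < zeta < pi ->
  (1 <= m)%N -> (s <= m)%N ->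
  (forall a b : 'I_m, a != b ->
     csinh (lam a - lam b + iR ((eps m s a + eps m s b) * zeta)) != 0) ->
  forall (tau : 'S_m) (xi : 'I_m -> R[i]),
    G zeta m s lam (fun k => xi (tau k)) = G zeta m s lam xi.
Proof.
move=> _ _ _ den_neq0.
apply: (@perm_ind_adjacent m (fun tau => forall xi,
  G zeta m s lam (fun k => xi (tau k)) = G zeta m s lam xi)).
- by move=> xi; congr G; apply: functional_extensionality => k; rewrite perm1.
- move=> tau1 tau2 G1 G2 xi.
  rewrite -[RHS]G2 -(G1 (fun k => xi (tau2 k))); congr G.
  by apply: functional_extensionality => k; rewrite permM.
- by move=> x y yE xi; apply: G_swap_adjacent.
Qed.
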